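(* Let $C_6=\langle a\mid a^6=e\rangle$ and $\Delta=\{a,a^{-1},a^2,a^{-2}\}$ (so $C_\Delta(C_6)$ is the Johnson graph $J(4,2)$). Then $W=W_{a}U_{a}+W_{a^{-1}}U_{a^{-1}}+W_{a^2}U_{a^2}+W_{a^{-2}}U_{a^{-2}}$ is a homogeneous scalar quantum walk on $C_\Delta(C_6)$ if and only if, up to a global phase, $W_a=\tfrac12e^{i\phi}$, $W_{a^{-1}}=\tfrac12$, $W_{a^2}=\tfrac{(-1)^q}{2}$, $W_{a^{-2}}=\tfrac{(-1)^{q+1}}{2}e^{i\phi}$ for some real $\phi$ and some integer $q$.
   Context: The Cayley graph $C_\Delta(\Gamma)$ has vertex set $\Gamma$ and directed edges $(g,g\delta)$, $g\in\Gamma,\delta\in\Delta$. Let $\ell^2(\Gamma)$ have orthonormal basis $\{|g\rangle\}_{g\in\Gamma}$ and for $\delta\in\Gamma$ let $U_\delta|g\rangle=|g\delta\rangle$. A homogeneous scalar quantum walk on $C_\Delta(\Gamma)$ is a unitary operator $W=\sum_{\delta\in\Delta}W_\delta U_\delta$ with all complex coefficients $W_\delta$ nonzero. ''Up to a global phase'' means that all coefficients may be multiplied by a common complex number of modulus one. The Johnson graph $J(n,k)$ has as vertices the $k$-element subsets of an $n$-element set, two subsets being adjacent when they share $k-1$ elements. *)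

From HB Require Import structures.
From mathcomp Require Import all_boot all_order all_algebra.
From mathcomp Require Import spectral.
From mathcomp Require Import reals trigo.
From mathcomp Require Import complex.
Set Implicit Arguments. Unset Strict Implicit. Unset Printing Implicit Defensive.
Import Order.TTheory GRing.Theory Num.Theory.
Local Open Scope ring_scope.
Local Open Scope complex_scope.

(* The cyclic group C_6 = <a | a^6 = e> is written additively as 'Z_6,
   with generator a = 1, so a^k corresponds to k%:R. *)

(* ell^2(C_6) = C^6, basis vectors |g> indexed by g : 'Z_6.
   U d |g> = |g + d>, i.e. the matrix entry (h, g) is [h == g + d]. *)
Definition Ushift (R : realType) (d : 'Z_6) : 'M[R[i]]_6 :=
  \matrix_(h, g) ((h == (g + d)%R :> 'Z_6)%:R).

Definition walkC6 (R : realType) (wa wai wa2 wa2i : R[i]) : 'M[R[i]]_6 :=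
  wa *: Ushift R 1 + wai *: Ushift R (- 1) + wa2 *: Ushift R 2
  + wa2i *: Ushift R (- 2).

Definition homogeneous_scalar_QW_C6 (R : realType) (wa wai wa2 wa2i : R[i]) : Prop :=
  walkC6 wa wai wa2 wa2i \is unitarymx /\ (walkC6 wa wai wa2 wa2i)^T \is unitarymx
  /\ [/\ wa != 0, wai != 0, wa2 != 0 & wa2i != 0].

Definition expi (R : realType) (phi : R) : R[i] := (cos phi)%:C + 'i * (sin phi)%:C.

(* The walk W is a circulant matrix: W h g = w (h - g), where w : 'Z_6 -> C
   takes the values W_a, W_{a^-1}, W_{a^2}, W_{a^-2} at 1, -1, 2, -2 and 0
   elsewhere.  Hence W W^* = 1 says exactly that the autocorrelation
   sum_k w (t + k) w(k)^* of w is 1 at t = 0 and 0 elsewhere; the shifts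
   t = 0, 1, 2, 3 give four polynomial equations in the coefficients, and the
   shifts -1, -2 their conjugates.  Combining the equations for the shifts 1
   and 2 gives W_{a^-2}^2 = W_a^2, so W_{a^-2} = -s W_a with s = 1 or -1; the
   shift-1 equation then gives W_{a^2} = s W_{a^-1}, and the shift-3 and
   shift-0 equations force |W_a| = |W_{a^-1}| = 1/2.  Taking the global phase
   c = 2 W_{a^-1}, e^{i phi} = W_a / W_{a^-1} and s = (-1)^q gives the stated
   form, and conversely every such family satisfies the four equations. *)

From HB Require Import structures.
From mathcomp Require Import all_boot all_order all_algebra.
From mathcomp Require Import spectral.
From mathcomp Require Import reals trigo.
From mathcomp Require Import complex.
From mathcomp Require Import ring lra.
Import Order.TTheory GRing.Theory Num.Theory.
Local Open Scope ring_scope.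

Section Circulant.
Context {C : numClosedFieldType} {n : nat}.

Definition autocorr (f : 'I_n.+1 -> C) (t : 'I_n.+1) : C :=
  \sum_k f (t + k) * (f k)^*.

Lemma autocorrN f t : autocorr f (- t) = (autocorr f t)^*.
Proof.
rewrite /autocorr rmorph_sum (reindex_inj (addrI t)) /=.
by apply: eq_bigr => k _; rewrite addKr rmorphM /= conjCK mulrC.
Qed.

Local Open Scope sesquilinear_scope.

Lemma circulant_mulmx_adj {M : 'M[C]_n.+1} {f} :
  (forall h g, M h g = f (h - g)) ->
  forall h g, (M *m M^t*) h g = autocorr f (h - g).
Proof.
move=> Mf h g; rewrite !mxE /autocorr (reindex_inj (subrI g)) /=.
by apply: eq_bigr => k _; rewrite !mxE !Mf subKr opprB addrA addrAC.
Qed.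

Lemma circulant_unitaryP {M : 'M[C]_n.+1} {f} :
  (forall h g, M h g = f (h - g)) ->
  M \is unitarymx <-> forall t, autocorr f t = (t == 0)%:R.
Proof.
move=> Mf; split => [/unitarymxP MMt t | acf].
  have := congr1 (fun A : 'M_n.+1 => A t 0) MMt.
  by rewrite (circulant_mulmx_adj Mf) subr0 !mxE.
apply/unitarymxP/matrixP => h g.
by rewrite (circulant_mulmx_adj Mf) acf subr_eq0 mxE.
Qed.

End Circulant.

Lemma sign_neq0 {R : nzRingType} {s : R} : s = 1 \/ s = -1 -> s != 0.
Proof. by case=> ->; rewrite ?oppr_eq0 oner_eq0. Qed.

Lemma sign_sqr {R : pzRingType} {s : R} : s = 1 \/ s = -1 -> s * s = 1.
Proof. by case=> ->; rewrite ?mulrNN mulr1. Qed.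

Lemma sign_conj {C : numClosedFieldType} {s : C} : s = 1 \/ s = -1 -> s^* = s.
Proof. by case=> ->; rewrite ?rmorphN rmorph1. Qed.

Lemma sign_exprz {R : idomainType} (q : int) :
  ((-1) ^ q : R) = 1 \/ ((-1) ^ q : R) = -1.
Proof.
have : ((-1) ^ q) ^+ 2 == 1 :> R.
  by rewrite exprnP exprzAC -exprnP sqrrN expr1n exp1rz.
by rewrite sqrf_eq1 => /orP[] /eqP; [left | right].
Qed.

Section Expi.
Context {R : realType}.

Lemma expiE (phi : R) : expi phi = (cos phi +i* sin phi)%C.
Proof.
by apply/eqP; rewrite eq_complex /=; apply/andP; split; apply/eqP; ring.
Qed.

Lemma norm_expi (phi : R) : `|expi phi| = 1.
Proof. by rewrite expiE normc_def /= cos2Dsin2 sqrtr1. Qed.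

Lemma norm1_expi (z : R[i]) : `|z| = 1 -> exists phi : R, expi phi = z.
Proof.
case: z => x y; rewrite normc_def /= => /eqP.
rewrite eq_complex /= => /andP[+ _].
rewrite -sqrtr1 eqr_sqrt ?addr_ge0 ?sqr_ge0 ?ler01 // => /eqP xy1.
have x_bound : -1 <= x <= 1 by apply/andP; split; nra.
have cos_acos_x : cos (acos x) = x by rewrite acosK // in_itv.
have sin_acos_x : sin (acos x) = `|y|.
  by rewrite sin_acos // -sqrtr_sqr -xy1 addrC addKr.
have [y_ge0 | y_lt0] := lerP 0 y.
  by exists (acos x); rewrite expiE cos_acos_x sin_acos_x ger0_norm.
exists (- acos x).
by rewrite expiE cosN sinN cos_acos_x sin_acos_x ltr0_norm ?opprK.
Qed.

End Expi.

Section Walk.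
Context {R : realType}.
Local Notation C := R[i].
Implicit Types a b c d : C.

Definition walk_coef a b c d (k : 'Z_6) : C :=
  a * (k == 1)%:R + b * (k == -1)%:R + c * (k == 2)%:R + d * (k == -2)%:R.

Lemma walkC6E a b c d h g : walkC6 a b c d h g = walk_coef a b c d (h - g).
Proof. by rewrite !mxE /walk_coef !subr_eq !(addrC g). Qed.

Lemma autocorr_walk_coef a b c d (w := walk_coef a b c d) :
  [/\ autocorr w 0 = a * a^* + b * b^* + c * c^* + d * d^*,
      autocorr w 1 = b * d^* + c * a^*,
      autocorr w 2 = a * b^* + d * c^*
    & autocorr w 3 = a * d^* + b * c^* + d * a^* + c * b^*].
Proof.
rewrite /autocorr /w /walk_coef !big_ord_recl !big_ord0 /=.
rewrite !(mulr0, mulr1, addr0, add0r, conjC0, mul0r).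
by split; ring.
Qed.

Definition walk_unitarity a b c d : Prop :=
  [/\ a * a^* + b * b^* + c * c^* + d * d^* = 1,
      b * d^* + c * a^* = 0,
      a * b^* + d * c^* = 0
    & a * d^* + b * c^* + d * a^* + c * b^* = 0].

Lemma walkC6_unitaryP a b c d :
  walkC6 a b c d \is unitarymx <-> walk_unitarity a b c d.
Proof.
have [A0 A1 A2 A3] := autocorr_walk_coef a b c d.
rewrite (circulant_unitaryP (walkC6E a b c d)) /walk_unitarity -A0 -A1 -A2 -A3.
split=> [acf | [E0 E1 E2 E3] t]; first by rewrite !acf.
have : t \in [:: 0; 1; 2; 3; -2; -1] by case: t => -[|[|[|[|[|[|]]]]]].
rewrite !inE => /or4P[|||/or3P[||]] /eqP->;
  by rewrite ?autocorrN ?E0 ?E1 ?E2 ?E3 ?conjC0.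
Qed.

Lemma walk_unitarity_sign {a b c d : C} : b != 0 -> walk_unitarity a b c d ->
  exists2 s : C, s = 1 \/ s = -1 & d = - s * a.
Proof.
move=> b0 [_ E1 E2 _].
have : b^* * ((d - a) * (d + a)) = 0.
  transitivity (d * (b * d^* + c * a^*)^* - a * (a * b^* + d * c^*)).
    by rewrite rmorphD !rmorphM /= !conjCK; ring.
  by rewrite E1 E2 conjC0; ring.
move/eqP; rewrite !mulf_eq0 conjC_eq0 (negbTE b0) /= subr_eq0 addr_eq0.
by case/orP=> /eqP->; [exists (-1); [right | ring] | exists 1; [left | ring]].
Qed.

Lemma walk_unitarityP {a b c d : C} : a != 0 -> b != 0 ->
  walk_unitarity a b c d <->
  exists2 s : C, s = 1 \/ s = -1 &
    [/\ c = s * b, d = - s * a, `|a| = `|b| & `|b| = 2^-1].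
Proof.
move=> a0 b0; split=> [E | [s s_pm [-> -> ab b_half]]]; last first.
  have nb : b * b^* = 2^-1 ^+ 2 by rewrite -normCK b_half.
  have na : a * a^* = 2^-1 ^+ 2 by rewrite -normCK ab b_half.
  rewrite /walk_unitarity !rmorphM rmorphN /= (sign_conj s_pm); split.
  - transitivity ((1 + s * s) * (a * a^* + b * b^*)); first ring.
    by rewrite (sign_sqr s_pm) na nb; field.
  - ring.
  - transitivity ((1 - s * s) * (a * b^*)); first ring.
    by rewrite (sign_sqr s_pm) subrr mul0r.
  - transitivity (2 * s * (b * b^* - a * a^*)); first ring.
    by rewrite na nb subrr mulr0.
have [s s_pm dE] := walk_unitarity_sign b0 E.
case: E => E0 E1 E2 E3.
have cE : c = s * b.
  have : a^* * (c - s * b) = 0.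
    by rewrite -E1 dE rmorphM rmorphN /= (sign_conj s_pm); ring.
  by move/eqP; rewrite mulf_eq0 conjC_eq0 (negbTE a0) subr_eq0 => /eqP.
have ab2 : `|a| ^+ 2 = `|b| ^+ 2.
  have : 2 * s * (`|b| ^+ 2 - `|a| ^+ 2) = 0.
    by rewrite -E3 dE cE !normCK !rmorphM rmorphN /= (sign_conj s_pm); ring.
  move/eqP; rewrite !mulf_eq0 pnatr_eq0 (negbTE (sign_neq0 s_pm)) /=.
  by rewrite subr_eq0 => /eqP.
have b2 : (2 * `|b|) ^+ 2 = 1.
  rewrite -[RHS]E0 cE dE !rmorphM rmorphN /= (sign_conj s_pm).
  transitivity ((1 + s * s) * (`|a| ^+ 2 + `|b| ^+ 2)).
    by rewrite (sign_sqr s_pm) ab2; ring.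
  by rewrite !normCK; ring.
have two_b : 2 * `|b| = 1.
  by apply/eqP; rewrite -sqrp_eq1 ?mulr_ge0 ?ler0n ?normr_ge0 ?b2.
exists s => //; split => //.
  by apply/eqP; rewrite -(eqrXn2 (n := 2)) ?normr_ge0 ?ab2.
have two_nz : (2 : C) != 0 by rewrite pnatr_eq0.
by apply: (mulfI two_nz); rewrite two_b mulfV.
Qed.

Lemma walk_unitarity_phase {u e s : C} :
  `|u| = 1 -> `|e| = 1 -> s = 1 \/ s = -1 ->
  walk_unitarity (u * (2^-1 * e)) (u * 2^-1) (u * (s / 2)) (u * (- s / 2 * e)).
Proof.
move=> u1 e1 s_pm.
have u0 : u != 0 by rewrite -normr_eq0 u1 oner_eq0.
have e0 : e != 0 by rewrite -normr_eq0 e1 oner_eq0.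
have a0 : u * (2^-1 * e) != 0 by rewrite !mulf_neq0 ?invr_eq0 ?pnatr_eq0.
have b0 : u * 2^-1 != 0 by rewrite !mulf_neq0 ?invr_eq0 ?pnatr_eq0.
apply/(walk_unitarityP a0 b0); exists s => //; split.
- ring.
- ring.
- by rewrite !normrM e1 mulr1.
- by rewrite normrM u1 mul1r normfV normr_nat.
Qed.

End Walk.

Local Open Scope complex_scope.

Theorem mainTheorem11 (R : realType) (wa wai wa2 wa2i : R[i]) :
  homogeneous_scalar_QW_C6 wa wai wa2 wa2i <->
  exists (c : R[i]) (phi : R) (q : int),
    `|c| = 1 /\
    [/\ wa = c * (2^-1 * expi phi),
        wai = c * 2^-1,
        wa2 = c * ((-1) ^ q / 2)
      & wa2i = c * ((-1) ^ (q + 1) / 2 * expi phi)].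
Proof.
have two_nz : (2 : R[i]) != 0 by rewrite pnatr_eq0.
have N1_nz : (-1 : R[i]) != 0 by rewrite oppr_eq0 oner_eq0.
rewrite /homogeneous_scalar_QW_C6 trmx_unitary walkC6_unitaryP.
split=> [[U [_ [a0 b0 _ _]]] | [u [phi [q [u1 [-> -> -> ->]]]]]].
  have [s s_pm [-> -> ab b_half]] := (walk_unitarityP a0 b0).1 U.
  have [phi ephi] : exists phi, expi phi = wa / wai.
    by apply: norm1_expi; rewrite normf_div ab divff // normr_eq0.
  have [q sq] : exists q : int, (-1) ^ q = s.
    by case: s_pm => ->; [exists 0 | exists 1].
  exists (2 * wai), phi, q; split.
    by rewrite normrM normr_nat b_half mulfV.
  by rewrite ephi expfzDr // sq expr1z; split; field.
have s_pm := sign_exprz (R := R[i]) q.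
have U := walk_unitarity_phase u1 (norm_expi phi) s_pm.
have u0 : u != 0 by rewrite -normr_eq0 u1 oner_eq0.
have e0 : expi phi != 0 by rewrite -normr_eq0 norm_expi oner_eq0.
rewrite expfzDr // expr1z mulrN1; split=> //; split=> //.
by split; rewrite !mulf_neq0 ?invr_eq0 ?oppr_eq0 ?(sign_neq0 s_pm).
Qed.
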